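(* Let $V$ be a real inner product space with induced norm $\lVert\cdot\rVert$. Let $a,b,a',b'\in V$ and $\gamma\ge0$ satisfy \[ \max\{\lVert x-y\rVert : x,y\in\{a,b,a',b'\}\}\le\gamma\le \lVert a-b\rVert+\lVert a'-b'\rVert . \] Then, with $m=(a+b)/2$ and $m'=(a'+b')/2$, we have $\lVert m-m'\rVert\le\sqrt{\tfrac78}\,\gamma$. *)

From mathcomp Require Import all_boot all_order all_algebra.
From mathcomp Require Import reals.
Set Implicit Arguments. Unset Strict Implicit. Unset Printing Implicit Defensive.
Import Order.TTheory GRing.Theory Num.Theory.
Local Open Scope ring_scope.

Definition is_inner_product (R : realType) (V : lmodType R) (ip : V -> V -> R) : Prop :=
  [/\ (forall x y, ip x y = ip y x),
      (forall c x y z, ip (c *: x + y) z = c * ip x z + ip y z),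
      (forall x, 0 <= ip x x) &
      (forall x, ip x x = 0 -> x = 0)].

Definition ipnorm (R : realType) (V : lmodType R) (ip : V -> V -> R) (x : V) : R :=
  Num.sqrt (ip x x).

(** The segment joining the midpoints m, m' of the diagonals [a b] and [a' b']
   of the quadrilateral a a' b b' satisfies Euler's quadrilateral identity
   4 |m - m'|^2 = |a - a'|^2 + |a' - b|^2 + |b - b'|^2 + |b' - a|^2
                  - |a - b|^2 - |a' - b'|^2,
   a consequence of the parallelogram law.  The four sides are at most gamma,
   and gamma <= |a - b| + |a' - b'| gives |a - b|^2 + |a' - b'|^2 >= gamma^2 / 2,
   so 4 |m - m'|^2 <= 4 gamma^2 - gamma^2 / 2 = 7 gamma^2 / 2. *)
From mathcomp Require Import all_boot all_order all_algebra.
From mathcomp Require Import reals.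
From mathcomp Require Import lra.
Import Order.TTheory GRing.Theory Num.Theory.
Local Open Scope ring_scope.
Set Implicit Arguments.
Unset Strict Implicit.

Section InnerProduct.
Variables (R : realType) (V : lmodType R) (ip : V -> V -> R).
Hypothesis ip_inner : is_inner_product ip.

Local Notation "`| x |_ip" := (ipnorm ip x) (format "`| x |_ip").

Lemma ipC x y : ip x y = ip y x.
Proof. by case: ip_inner. Qed.

Lemma ip0l z : ip 0 z = 0.
Proof.
case: ip_inner => _ ip_lin _ _.
have := ip_lin 1 0 0 z; rewrite scale1r addr0 mul1r; lra.
Qed.

Lemma ipDl x y z : ip (x + y) z = ip x z + ip y z.
Proof. by case: ip_inner => _ ip_lin _ _; have := ip_lin 1 x y z; rewrite scale1r mul1r. Qed.

Lemma ipZl c x z : ip (c *: x) z = c * ip x z.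
Proof.
by case: ip_inner => _ ip_lin _ _; have := ip_lin c x 0 z; rewrite addr0 ip0l addr0.
Qed.

Lemma ipNl x z : ip (- x) z = - ip x z.
Proof. by rewrite -scaleN1r ipZl mulN1r. Qed.

Lemma ipDr x y z : ip z (x + y) = ip z x + ip z y.
Proof. by rewrite ipC ipDl !(ipC z). Qed.

Lemma ipNr x z : ip z (- x) = - ip z x.
Proof. by rewrite ipC ipNl ipC. Qed.

Lemma ipZr c x z : ip z (c *: x) = c * ip z x.
Proof. by rewrite ipC ipZl ipC. Qed.

Lemma ipnorm_ge0 x : 0 <= `|x|_ip.
Proof. exact: sqrtr_ge0. Qed.

Lemma ipnorm_sqr x : `|x|_ip ^+ 2 = ip x x.
Proof. by case: ip_inner => _ _ ip_ge0 _; rewrite sqr_sqrtr. Qed.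

Lemma ipnormZ c x : `|c *: x|_ip = `|c| * `|x|_ip.
Proof.
by rewrite /ipnorm ipZl ipZr mulrA -expr2 sqrtrM ?sqr_ge0 // sqrtr_sqr.
Qed.

Lemma ipnorm_parallelogram x y :
  `|x + y|_ip ^+ 2 + `|x - y|_ip ^+ 2 = 2 * `|x|_ip ^+ 2 + 2 * `|y|_ip ^+ 2.
Proof. rewrite !ipnorm_sqr !ipDl !ipDr !ipNl !ipNr (ipC y x); lra. Qed.

Lemma ipnorm_euler_quadrilateral a b a' b' :
  `|(a + b) - (a' + b')|_ip ^+ 2 + `|a - b|_ip ^+ 2 + `|a' - b'|_ip ^+ 2
  = `|a - a'|_ip ^+ 2 + `|b - b'|_ip ^+ 2 + `|a - b'|_ip ^+ 2 + `|b - a'|_ip ^+ 2.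
Proof.
have p1 := ipnorm_parallelogram (a - a') (b - b').
have p2 := ipnorm_parallelogram (a - b') (b - a').
have p3 := ipnorm_parallelogram (a - b) (a' - b').
have sum_aa'_bb' : a - a' + (b - b') = a + b - (a' + b') by rewrite opprD addrACA.
have sum_ab'_ba' : a - b' + (b - a') = a + b - (a' + b').
  by rewrite opprD [- a' - b']addrC addrACA.
have dif_aa'_bb' : a - a' - (b - b') = a - b - (a' - b').
  by rewrite !opprB addrACA [RHS]addrACA [- b + _]addrC.
have dif_ab'_ba' : a - b' - (b - a') = a - b + (a' - b').
  by rewrite !opprB addrACA [RHS]addrACA [- b + _]addrC.
rewrite sum_aa'_bb' dif_aa'_bb' in p1; rewrite sum_ab'_ba' dif_ab'_ba' in p2; lra.
Qed.

End InnerProduct.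

Lemma sqr_le_2sum_sqr (R : realDomainType) (g s t : R) :
  0 <= g -> g <= s + t -> g ^+ 2 <= 2 * (s ^+ 2 + t ^+ 2).
Proof.
move=> g_ge0 g_le; have st_ge0 : 0 <= s + t by exact: le_trans g_le.
have := sqr_ge0 (s - t); rewrite sqrrB => hst.
apply: (le_trans (_ : _ <= (s + t) ^+ 2)); first by rewrite lerXn2r ?nnegrE.
rewrite sqrrD; lra.
Qed.

Lemma ler_sqrtM_of_sqr (R : rcfType) (x c g : R) :
  0 <= g -> x ^+ 2 <= c * g ^+ 2 -> x <= Num.sqrt c * g.
Proof.
move=> g_ge0 hx; apply: le_trans (ler_norm x) _.
rewrite -sqrtr_sqr mulrC -[g in X in _ <= X]ger0_norm // -sqrtr_sqr.
by rewrite -sqrtrM ?sqr_ge0 // mulrC ler_wsqrtr.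
Qed.

Theorem lemma2 (R : realType) (V : lmodType R) (ip : V -> V -> R)
  (Hip : is_inner_product ip) (a b a' b' : V) (gamma : R)
  (Hg0 : 0 <= gamma)
  (Hmax : forall x y, x \in [:: a; b; a'; b'] -> y \in [:: a; b; a'; b'] ->
            ipnorm ip (x - y) <= gamma)
  (Hsum : gamma <= ipnorm ip (a - b) + ipnorm ip (a' - b')) :
  ipnorm ip ((2 : R)^-1 *: (a + b) - (2 : R)^-1 *: (a' + b'))
    <= Num.sqrt (7%:R / 8%:R) * gamma.
Proof.
have side_sqr x y : x \in [:: a; b; a'; b'] -> y \in [:: a; b; a'; b'] ->
    ipnorm ip (x - y) ^+ 2 <= gamma ^+ 2.
  by move=> xP yP; rewrite lerXn2r ?nnegrE ?ipnorm_ge0 ?Hmax.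
have side_aa' : ipnorm ip (a - a') ^+ 2 <= gamma ^+ 2 by rewrite side_sqr ?inE ?eqxx ?orbT.
have side_bb' : ipnorm ip (b - b') ^+ 2 <= gamma ^+ 2 by rewrite side_sqr ?inE ?eqxx ?orbT.
have side_ab' : ipnorm ip (a - b') ^+ 2 <= gamma ^+ 2 by rewrite side_sqr ?inE ?eqxx ?orbT.
have side_ba' : ipnorm ip (b - a') ^+ 2 <= gamma ^+ 2 by rewrite side_sqr ?inE ?eqxx ?orbT.
have diag := sqr_le_2sum_sqr Hg0 Hsum.
have euler := ipnorm_euler_quadrilateral Hip a b a' b'.
apply: ler_sqrtM_of_sqr => //.
rewrite -scalerBr ipnormZ // exprMn gtr0_norm ?invr_gt0 ?ltr0n //.
lra.
Qed.
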